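(* Let $r,m\ge0$ and $k\ge1$ be integers and $n\ge0$. Then $$\lim_{q\to1}\frac{\sum_{j=0}^{2n+1}(-1)^jq^{rj^2+mj}\begin{bmatrix} 2n+1\\ j\end{bmatrix}_{q^k}}{(q;q^2)_{n+1}}=\big((2n+1)r+m\big)(k-2r)^n.$$
   Context: $(x;q)_n=\prod_{j=0}^{n-1}(1-q^jx)$. The Gaussian binomial coefficient is $\begin{bmatrix} n\\ j\end{bmatrix}_q=\frac{(q;q)_n}{(q;q)_j(q;q)_{n-j}}$ for $0\le j\le n$, a polynomial in $q$; $\begin{bmatrix} n\\ j\end{bmatrix}_{q^k}$ is this with $q$ replaced by $q^k$. The quotient is a rational function of $q$ and the limit is taken as $q\to1$. *)

From Stdlib Require Import Reals.
Open Scope R_scope.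

Fixpoint qpoch (x q : R) (n : nat) : R :=
  match n with
  | O => 1
  | S n' => qpoch x q n' * (1 - q ^ n' * x)
  end.

Definition qbinom (q : R) (n j : nat) : R :=
  qpoch q q n / (qpoch q q j * qpoch q q (n - j)).

Definition thm_num (r m k n : nat) (q : R) : R :=
  sum_f_R0 (fun j => (-1) ^ j * q ^ (r * j * j + m * j) * qbinom (q ^ k) (2 * n + 1) j)
           (2 * n + 1).

Definition thm_quot (r m k n : nat) (q : R) : R :=
  thm_num r m k n q / qpoch q (q ^ 2) (n + 1).

From Stdlib Require Import Reals Lra Lia List.
From Coquelicot Require Import Coquelicot.
Open Scope R_scope.

(* Put q = e^z.  The numerator becomes the exponential polynomial S_(2n+1)(m) in z, where
   S_N(x) := sum_j (-1)^j e^((r j^2 + x j) z) [N; j]_(e^(k z)) obeys the q-Pascal recursion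
   S_(N+1)(x) = S_N(x + k) - e^((r + x) z) S_N(x + 2r), and the denominator becomes
   prod_(i <= n) (1 - e^((2i+1) z)) ~ prod_(i <= n) (-(2i+1)) z^(n+1).  The Taylor coefficients of
   S_N(x) at z = 0 are its moments; by the recursion the s-th moment is a polynomial in x of degree
   at most 2s - N.  Hence for N = 2n+1 the moments of order <= n vanish, and the (n+1)-st is affine
   in x: its slope comes from S_N(x + k) - S_N(x) = e^((r+x) z) (1 - e^(k N z)) S_(N-1)(x + 2r) and
   its zero, x = -r N, from the reflection S_N(x) = (-1)^N e^((r N^2 + x N) z) S_N(-2 r N - x). *)

(* [(c, l) :: e] stands for the function [z |-> c * exp (l * z) + ...]. *)
Definition expoly := list (R * R).

Fixpoint expoly_eval (e : expoly) (z : R) : R :=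
  match e with nil => 0 | (c, l) :: e' => c * exp (l * z) + expoly_eval e' z end.

Fixpoint expoly_deriv (s : nat) (e : expoly) (z : R) : R :=
  match e with nil => 0 | (c, l) :: e' => c * l ^ s * exp (l * z) + expoly_deriv s e' z end.

Fixpoint moment (s : nat) (e : expoly) : R :=
  match e with nil => 0 | (c, l) :: e' => c * l ^ s + moment s e' end.

Definition expoly_opp (e : expoly) : expoly := map (fun p => (- fst p, snd p)) e.
Definition expoly_shift (a : R) (e : expoly) : expoly := map (fun p => (fst p, snd p + a)) e.
Definition expoly_mirror (e : expoly) : expoly := map (fun p => (fst p, - snd p)) e.

Lemma expoly_eval_app e1 e2 z : expoly_eval (e1 ++ e2) z = expoly_eval e1 z + expoly_eval e2 z.
Proof. induction e1 as [|[c l] e IH]; simpl; [ring | rewrite IH; ring]. Qed.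

Lemma expoly_eval_opp e z : expoly_eval (expoly_opp e) z = - expoly_eval e z.
Proof. induction e as [|[c l] e IH]; simpl in *; [ring | rewrite IH; ring]. Qed.

Lemma expoly_eval_shift a e z : expoly_eval (expoly_shift a e) z = exp (a * z) * expoly_eval e z.
Proof.
induction e as [|[c l] e IH]; simpl in *; [ring|].
rewrite IH, Rmult_plus_distr_r, exp_plus; ring.
Qed.

Lemma expoly_eval_mirror e z : expoly_eval (expoly_mirror e) z = expoly_eval e (- z).
Proof.
induction e as [|[c l] e IH]; simpl in *; [ring|].
rewrite IH; replace (- l * z) with (l * - z) by ring; ring.
Qed.

Lemma moment_app s e1 e2 : moment s (e1 ++ e2) = moment s e1 + moment s e2.
Proof. induction e1 as [|[c l] e IH]; simpl; [ring | rewrite IH; ring]. Qed.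

Lemma moment_opp s e : moment s (expoly_opp e) = - moment s e.
Proof. induction e as [|[c l] e IH]; simpl in *; [ring | rewrite IH; ring]. Qed.

Lemma moment_mirror s e : moment s (expoly_mirror e) = (-1) ^ s * moment s e.
Proof.
induction e as [|[c l] e IH]; simpl in *; [ring|].
rewrite IH; replace (- l) with (-1 * l) by ring; rewrite Rpow_mult_distr; ring.
Qed.

Lemma moment_shift s a e :
  moment s (expoly_shift a e) = sum_f_R0 (fun u => Binomial.C s u * a ^ u * moment (s - u) e) s.
Proof.
induction e as [|[c l] e IH]; simpl in *.
- symmetry; apply sum_eq_R0; intros; ring.
- rewrite IH, (Rplus_comm l a), binomial, scal_sum, <- plus_sum.
  apply sum_eq; intros; ring.
Qed.

Lemma is_derive_expoly_deriv s e z : is_derive (expoly_deriv s e) z (expoly_deriv (S s) e z).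
Proof.
induction e as [|[c l] e IH]; simpl.
- apply (is_derive_const (0 : R)).
- apply (is_derive_plus (fun t => c * l ^ s * exp (l * t)) (expoly_deriv s e)); [|exact IH].
  auto_derive; [exact I | ring].
Qed.

Lemma Derive_n_expoly_eval s e z : Derive_n (expoly_eval e) s z = expoly_deriv s e z.
Proof.
revert z; induction s as [|s IH]; intros z; simpl.
- induction e as [|[c l] e IH]; simpl; [ring | rewrite IH; ring].
- rewrite (Derive_ext _ _ _ IH); apply is_derive_unique, is_derive_expoly_deriv.
Qed.

Lemma ex_derive_n_expoly_eval s e z : ex_derive_n (expoly_eval e) s z.
Proof.
destruct s as [|s]; simpl; [exact I|].
apply ex_derive_ext with (expoly_deriv s e); [intros; symmetry; apply Derive_n_expoly_eval|].
eexists; apply is_derive_expoly_deriv.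
Qed.

Lemma expoly_deriv_0 s e : expoly_deriv s e 0 = moment s e.
Proof. induction e as [|[c l] e IH]; simpl; [ring | rewrite IH, Rmult_0_r, exp_0; ring]. Qed.

(* The moments are the Taylor coefficients at 0, so they depend only on the function. *)
Lemma moment_eq_of_eval_eq s e e' :
  (forall z, expoly_eval e z = expoly_eval e' z) -> moment s e = moment s e'.
Proof.
intros H; rewrite <- !expoly_deriv_0, <- !Derive_n_expoly_eval.
apply Derive_n_ext; exact H.
Qed.

Lemma C_n_1 n : Binomial.C (S n) 1 = INR (S n).
Proof. rewrite (pascal_step3 (S n) 0), C_n_0, Nat.sub_0_r by lia. simpl INR at 2. field. Qed.

Lemma moment_shift_low a e t :
  (forall j, (j < t)%nat -> moment j e = 0) -> moment t (expoly_shift a e) = moment t e.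
Proof.
intros H; rewrite moment_shift; destruct t as [|t].
- simpl; rewrite C_n_0; ring.
- rewrite decomp_sum by lia; simpl pred.
  rewrite C_n_0, Nat.sub_0_r, sum_eq_R0; [ring|].
  intros i _; rewrite H by lia; ring.
Qed.

Lemma moment_shift_low_S a e t :
  (forall j, (j < t)%nat -> moment j e = 0) ->
  moment (S t) (expoly_shift a e) = moment (S t) e + INR (S t) * a * moment t e.
Proof.
intros H; rewrite moment_shift, decomp_sum by lia; simpl pred.
rewrite C_n_0, Nat.sub_0_r.
destruct t as [|t].
- simpl; rewrite C_n_1; simpl INR; ring.
- rewrite decomp_sum by lia; simpl pred.
  rewrite C_n_1, sum_eq_R0; [replace (S (S t) - 1)%nat with (S t) by lia; simpl; ring|].
  intros i _; rewrite H by lia; ring.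
Qed.

Lemma moment_sub_shift_low c A n : (forall j, (j < n)%nat -> moment j A = 0) ->
  moment (S n) (A ++ expoly_opp (expoly_shift c A)) = - INR (S n) * c * moment n A.
Proof.
intros H; rewrite moment_app, moment_opp, moment_shift_low_S by exact H; ring.
Qed.

Lemma moment_sub_shift_low_lt c A n j : (forall j, (j < n)%nat -> moment j A = 0) -> (j <= n)%nat ->
  moment j (A ++ expoly_opp (expoly_shift c A)) = 0.
Proof.
intros H Hj; rewrite moment_app, moment_opp, moment_shift_low by (intros; apply H; lia); ring.
Qed.

(* All [d]-fold finite differences of [f], with arbitrary steps, vanish; for polynomials this
   means degree < [d]. *)
Fixpoint fdiff_null (d : nat) (f : R -> R) : Prop :=
  match d with
  | O => forall x, f x = 0
  | S d' => forall h, fdiff_null d' (fun x => f (x + h) - f x)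
  end.

Lemma fdiff_null_ext d f g : (forall x, f x = g x) -> fdiff_null d f -> fdiff_null d g.
Proof.
revert f g; induction d as [|d IH]; intros f g E Hf; simpl in *.
- intros x; rewrite <- E; apply Hf.
- intros h; apply (IH (fun x => f (x + h) - f x)); [intros; rewrite !E; reflexivity | apply Hf].
Qed.

Lemma fdiff_null_lin d a f b g :
  fdiff_null d f -> fdiff_null d g -> fdiff_null d (fun x => a * f x + b * g x).
Proof.
revert f g; induction d as [|d IH]; intros f g Hf Hg; simpl in *.
- intros x; rewrite Hf, Hg; ring.
- intros h; eapply fdiff_null_ext; [| apply (IH _ _ (Hf h) (Hg h))]; intros; simpl; ring.
Qed.

Lemma fdiff_null_add d f g :
  fdiff_null d f -> fdiff_null d g -> fdiff_null d (fun x => f x + g x).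
Proof.
intros Hf Hg; eapply fdiff_null_ext; [| apply (fdiff_null_lin d 1 f 1 g Hf Hg)]; intros; simpl; ring.
Qed.

Lemma fdiff_null_sub d f g :
  fdiff_null d f -> fdiff_null d g -> fdiff_null d (fun x => f x - g x).
Proof.
intros Hf Hg; eapply fdiff_null_ext; [| apply (fdiff_null_lin d 1 f (-1) g Hf Hg)]; intros; simpl; ring.
Qed.

Lemma fdiff_null_scal d a f : fdiff_null d f -> fdiff_null d (fun x => a * f x).
Proof.
intros Hf; eapply fdiff_null_ext; [| apply (fdiff_null_lin d a f 0 f Hf Hf)]; intros; simpl; ring.
Qed.

Lemma fdiff_null_translate d b f : fdiff_null d f -> fdiff_null d (fun x => f (x + b)).
Proof.
revert f; induction d as [|d IH]; intros f Hf; simpl in *; [intros; apply Hf|].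
intros h; eapply fdiff_null_ext; [| apply (IH _ (Hf h))]; intros x; simpl.
replace (x + h + b) with (x + b + h) by ring; reflexivity.
Qed.

Lemma fdiff_null_S d f : fdiff_null d f -> fdiff_null (S d) f.
Proof.
revert f; induction d as [|d IH]; intros f Hf.
- intros h x; simpl in *; rewrite !Hf; ring.
- intros h; apply IH, Hf.
Qed.

Lemma fdiff_null_le d d' f : (d <= d')%nat -> fdiff_null d f -> fdiff_null d' f.
Proof. intros H; induction H; auto using fdiff_null_S. Qed.

Lemma fdiff_null_diff d a b f :
  fdiff_null d f -> fdiff_null (d - 1) (fun x => f (x + a) - f (x + b)).
Proof.
destruct d as [|d]; simpl; intros Hf.
- intros x; rewrite !Hf; ring.
- rewrite Nat.sub_0_r; eapply fdiff_null_ext; [| apply (fdiff_null_sub _ _ _ (Hf a) (Hf b))].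
  intros; simpl; ring.
Qed.

Lemma fdiff_null_0_mul f g : fdiff_null 0 g -> fdiff_null 0 (fun x => f x * g x).
Proof. simpl; intros H x; rewrite H; ring. Qed.

Lemma fdiff_null_mul_0 d f g : fdiff_null 0 f -> fdiff_null d (fun x => f x * g x).
Proof.
intros H; apply fdiff_null_le with 0%nat; [lia|].
simpl in *; intros x; rewrite H; ring.
Qed.

(* Leibniz rule: [D_h (f g) = f(. + h) D_h g + (D_h f) g]. *)
Lemma fdiff_null_mul_S a : forall b f g, fdiff_null (S a) f -> fdiff_null (S b) g ->
  fdiff_null (S (a + b)) (fun x => f x * g x).
Proof.
induction a as [|a IHa]; intros b; induction b as [|b IHb]; intros f g Hf Hg h;
  apply fdiff_null_ext with (fun x => f (x + h) * (g (x + h) - g x) + (f (x + h) - f x) * g x);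
  try (intros; ring); apply fdiff_null_add.
- exact (fdiff_null_0_mul _ _ (Hg h)).
- exact (fdiff_null_mul_0 _ _ _ (Hf h)).
- rewrite Nat.add_succ_r; apply (IHb (fun x => f (x + h))); [apply fdiff_null_translate |]; auto.
- exact (fdiff_null_mul_0 _ _ _ (Hf h)).
- apply fdiff_null_le with 0%nat; [lia | exact (fdiff_null_0_mul _ _ (Hg h))].
- apply (IHa 0%nat); auto.
- rewrite Nat.add_succ_r; apply (IHb (fun x => f (x + h))); [apply fdiff_null_translate |]; auto.
- apply (IHa (S b)); auto.
Qed.

Lemma fdiff_null_mul a b f g : fdiff_null (S a) f -> fdiff_null b g ->
  fdiff_null (a + b) (fun x => f x * g x).
Proof.
destruct b as [|b]; intros Hf Hg.
- apply fdiff_null_le with 0%nat; [lia | exact (fdiff_null_0_mul _ _ Hg)].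
- rewrite Nat.add_succ_r; apply fdiff_null_mul_S; assumption.
Qed.

Lemma fdiff_null_pow c u : fdiff_null (S u) (fun x => (c + x) ^ u).
Proof.
induction u as [|u IH]; [simpl; intros; ring|].
apply fdiff_null_ext with (fun x => (c + x) * (c + x) ^ u); [reflexivity|].
apply (fdiff_null_mul 1 (S u)); [simpl; intros; ring | exact IH].
Qed.

Lemma fdiff_null_sum d F s : (forall u, (u <= s)%nat -> fdiff_null d (F u)) ->
  fdiff_null d (fun x => sum_f_R0 (fun u => F u x) s).
Proof.
induction s as [|s IH]; intros H; simpl; [apply H; lia|].
apply fdiff_null_add; [apply IH; intros; apply H | apply H]; lia.
Qed.

Lemma fdiff_null_2_nat_step f : fdiff_null 2 f ->
  forall x M, f (x + INR M) = f x + INR M * (f 1 - f 0).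
Proof.
intros H x M; induction M as [|M IH]; [simpl; rewrite Rplus_0_r; ring|].
assert (H' := H 1 (x + INR M) 0); simpl in H'.
rewrite S_INR, <- Rplus_assoc, !Rplus_0_l in *; lra.
Qed.

Lemma exp_mul_add a b z : exp (a * z) * exp (b * z) = exp ((a + b) * z).
Proof. rewrite <- exp_plus; f_equal; ring. Qed.

Section QSum.
Variables r k : R.

(* [qsum_expoly N x] represents [z |-> sum_j (-1)^j e^((r j^2 + x j) z) [N; j]_(e^(k z))];
   the recursion is the q-Pascal rule. *)
Fixpoint qsum_expoly (N : nat) (x : R) : expoly :=
  match N with
  | O => (1, 0) :: nil
  | S N' => qsum_expoly N' (x + k) ++ expoly_opp (expoly_shift (r + x) (qsum_expoly N' (x + 2 * r)))
  end.

Lemma qsum_expoly_S N x : qsum_expoly (S N) x =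
  qsum_expoly N (x + k) ++ expoly_opp (expoly_shift (r + x) (qsum_expoly N (x + 2 * r))).
Proof. reflexivity. Qed.

Definition qsum_fun N x z := expoly_eval (qsum_expoly N x) z.

Lemma qsum_fun_0 x z : qsum_fun 0 x z = 1.
Proof. unfold qsum_fun; simpl; rewrite Rmult_0_l, exp_0; ring. Qed.

Lemma qsum_fun_S N x z :
  qsum_fun (S N) x z = qsum_fun N (x + k) z - exp ((r + x) * z) * qsum_fun N (x + 2 * r) z.
Proof. unfold qsum_fun; rewrite qsum_expoly_S, expoly_eval_app, expoly_eval_opp, expoly_eval_shift; ring. Qed.

Lemma qsum_fun_diff N x z :
  qsum_fun (S N) (x + k) z - qsum_fun (S N) x z =
  exp ((r + x) * z) * (1 - exp (k * INR (S N) * z)) * qsum_fun N (x + 2 * r) z.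
Proof.
revert x; induction N as [|N IH]; intros x.
- rewrite !qsum_fun_S, !qsum_fun_0; simpl INR.
  replace (r + (x + k)) with ((r + x) + k * 1) by ring; rewrite <- exp_mul_add; ring.
- rewrite (qsum_fun_S (S N) (x + k)), (qsum_fun_S (S N) x).
  assert (H1 := IH (x + k)); assert (H2 := IH (x + 2 * r)).
  replace (x + k + 2 * r) with (x + 2 * r + k) in * by ring.
  rewrite (qsum_fun_S N (x + 2 * r)) in *.
  replace (exp ((r + (x + k)) * z)) with (exp ((r + x) * z) * exp (k * z))
    in * by (rewrite exp_mul_add; f_equal; ring).
  replace (exp ((r + (x + 2 * r)) * z)) with (exp ((r + x) * z) * exp (2 * r * z))
    in * by (rewrite exp_mul_add; f_equal; ring).
  replace (exp (k * INR (S (S N)) * z)) with (exp (k * INR (S N) * z) * exp (k * z))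
    by (rewrite exp_mul_add, (S_INR (S N)); f_equal; ring).
  nra.
Qed.

Lemma qsum_fun_S_top N x z :
  qsum_fun (S N) x z = qsum_fun N x z - exp ((r + x + k * INR N) * z) * qsum_fun N (x + 2 * r - k) z.
Proof.
assert (H := qsum_fun_diff N (x - k) z); rewrite (qsum_fun_S N (x - k)) in H.
replace (x - k + k) with x in H by ring; replace (x - k + 2 * r) with (x + 2 * r - k) in H by ring.
replace (exp ((r + x + k * INR N) * z)) with (exp ((r + (x - k)) * z) * exp (k * INR (S N) * z))
  by (rewrite exp_mul_add, S_INR; f_equal; ring).
lra.
Qed.

(* The symmetry [j <-> N - j] of the Gaussian binomials. *)
Lemma qsum_fun_reflect N x z :
  qsum_fun N x z = (-1) ^ N * exp ((r * INR N ^ 2 + x * INR N) * z) * qsum_fun N (-2 * r * INR N - x) z.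
Proof.
revert x; induction N as [|N IH]; intros x.
- rewrite !qsum_fun_0; simpl INR.
  replace ((r * 0 ^ 2 + x * 0) * z) with 0 by ring; rewrite exp_0; simpl; ring.
- rewrite (qsum_fun_S N x), (IH (x + k)), (IH (x + 2 * r)), qsum_fun_S_top.
  replace (-2 * r * INR (S N) - x + 2 * r - k) with (-2 * r * INR N - (x + k)) by (rewrite S_INR; ring).
  replace (-2 * r * INR (S N) - x) with (-2 * r * INR N - (x + 2 * r)) by (rewrite S_INR; ring).
  set (y := -2 * r * INR N - (x + 2 * r)).
  replace (exp ((r * INR N ^ 2 + (x + k) * INR N) * z)) with
    (exp ((r * INR (S N) ^ 2 + x * INR (S N)) * z) * exp ((r + y + k * INR N) * z))
    by (rewrite exp_mul_add; f_equal; unfold y; rewrite S_INR; ring).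
  replace (exp ((r * INR (S N) ^ 2 + x * INR (S N)) * z)) with
    (exp ((r + x) * z) * exp ((r * INR N ^ 2 + (x + 2 * r) * INR N) * z))
    by (rewrite exp_mul_add; f_equal; rewrite S_INR; ring).
  simpl pow; ring.
Qed.
End QSum.

Fixpoint neg_odd_prod (n : nat) : R :=
  match n with O => -1 | S n' => neg_odd_prod n' * - (2 * INR n + 1) end.

Section Moments.
Variables r k : nat.

Definition qsum_moment N s x := moment s (qsum_expoly (INR r) (INR k) N x).

Lemma qsum_moment_S N s x :
  qsum_moment (S N) s x = qsum_moment N s (x + INR k) -
  sum_f_R0 (fun u => Binomial.C s u * (INR r + x) ^ u * qsum_moment N (s - u) (x + 2 * INR r)) s.
Proof. unfold qsum_moment; rewrite qsum_expoly_S, moment_app, moment_opp, moment_shift; reflexivity. Qed.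

Lemma qsum_moment_S_S N s x :
  qsum_moment (S N) (S s) x =
  (qsum_moment N (S s) (x + INR k) - qsum_moment N (S s) (x + 2 * INR r)) -
  sum_f_R0 (fun i => Binomial.C (S s) (S i) *
                     ((INR r + x) ^ S i * qsum_moment N (s - i) (x + 2 * INR r))) s.
Proof.
rewrite qsum_moment_S, (decomp_sum _ (S s)) by lia; simpl pred.
rewrite C_n_0, Nat.sub_0_r, pow_O.
replace (sum_f_R0 _ s) with
  (sum_f_R0 (fun i => Binomial.C (S s) (S i) *
                      ((INR r + x) ^ S i * qsum_moment N (s - i) (x + 2 * INR r))) s)
  by (apply sum_eq; intros; simpl; ring).
ring.
Qed.

Lemma qsum_moment_fdiff_null N : forall s, fdiff_null (2 * s + 1 - N) (qsum_moment N s).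
Proof.
induction N as [|N IH]; intros s.
- apply fdiff_null_le with 1%nat; [lia|]; intros h x; unfold qsum_moment; simpl; ring.
- destruct s as [|s].
  + eapply fdiff_null_ext; [intros x; symmetry; apply qsum_moment_S|].
    replace (2 * 0 + 1 - S N)%nat with ((2 * 0 + 1 - N) - 1)%nat by lia.
    eapply fdiff_null_ext; [| apply (fdiff_null_diff _ (INR k) (2 * INR r) _ (IH 0%nat))].
    intros x; simpl; rewrite C_n_0; ring.
  + eapply fdiff_null_ext; [intros x; symmetry; apply qsum_moment_S_S|].
    apply fdiff_null_sub.
    * replace (2 * S s + 1 - S N)%nat with ((2 * S s + 1 - N) - 1)%nat by lia.
      apply fdiff_null_diff, IH.
    * apply fdiff_null_sum; intros i Hi; apply fdiff_null_scal.
      assert (Hg := fdiff_null_translate _ (2 * INR r) _ (IH (s - i)%nat)).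
      destruct (Nat.eq_dec (2 * (s - i) + 1 - N) 0) as [E|E].
      -- rewrite E in Hg; apply fdiff_null_le with 0%nat; [lia|].
         exact (fdiff_null_0_mul _ _ Hg).
      -- apply fdiff_null_le with (S i + (2 * (s - i) + 1 - N))%nat; [lia|].
         apply fdiff_null_mul; [apply fdiff_null_pow | exact Hg].
Qed.

Lemma qsum_moment_vanish N s x : (2 * s < N)%nat -> qsum_moment N s x = 0.
Proof.
intros H; assert (D := qsum_moment_fdiff_null N s).
replace (2 * s + 1 - N)%nat with 0%nat in D by lia; apply D.
Qed.

Lemma qsum_moment_odd_diff n x E : (forall y, qsum_moment (2 * n) n y = E) ->
  qsum_moment (S (2 * n)) (S n) (x + INR k) - qsum_moment (S (2 * n)) (S n) x =
  - INR (S n) * (INR k * INR (S (2 * n))) * E.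
Proof.
intros HE.
set (A := qsum_expoly (INR r) (INR k) (2 * n) (x + 2 * INR r)).
set (c := INR k * INR (S (2 * n))).
assert (Hlow : forall j, (j < n)%nat -> moment j A = 0)
  by (intros; apply (qsum_moment_vanish (2 * n) j (x + 2 * INR r)); lia).
assert (Heval : forall z,
  expoly_eval (qsum_expoly (INR r) (INR k) (S (2 * n)) (x + INR k) ++
               expoly_opp (qsum_expoly (INR r) (INR k) (S (2 * n)) x)) z =
  expoly_eval (expoly_shift (INR r + x) (A ++ expoly_opp (expoly_shift c A))) z).
{ intros z; rewrite expoly_eval_app, expoly_eval_opp, expoly_eval_shift, expoly_eval_app,
    expoly_eval_opp, expoly_eval_shift.
  assert (D := qsum_fun_diff (INR r) (INR k) (2 * n) x z); unfold qsum_fun in D.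
  unfold A, c; rewrite Rmult_assoc in D; lra. }
assert (M := moment_eq_of_eval_eq (S n) _ _ Heval).
rewrite moment_app, moment_opp, moment_shift_low, moment_sub_shift_low in M by
  (exact Hlow || (intros; apply (moment_sub_shift_low_lt c A n); [exact Hlow | lia])).
unfold qsum_moment; rewrite <- (HE (x + 2 * INR r)); unfold qsum_moment; fold A c; lra.
Qed.

Lemma qsum_moment_odd_reflect n x :
  qsum_moment (S (2 * n)) (S n) x = - qsum_moment (S (2 * n)) (S n) (-2 * INR r * INR (S (2 * n)) - x).
Proof.
set (N := S (2 * n)).
assert (Heval : forall z, expoly_eval (qsum_expoly (INR r) (INR k) N x) z =
  expoly_eval (expoly_opp (expoly_shift (INR r * INR N ^ 2 + x * INR N)
                             (qsum_expoly (INR r) (INR k) N (-2 * INR r * INR N - x)))) z).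
{ intros z; rewrite expoly_eval_opp, expoly_eval_shift.
  assert (H := qsum_fun_reflect (INR r) (INR k) N x z); unfold qsum_fun in H.
  rewrite H; unfold N; rewrite pow_1_odd; ring. }
assert (M := moment_eq_of_eval_eq (S n) _ _ Heval).
rewrite moment_opp, moment_shift_low in M
  by (intros; apply (qsum_moment_vanish N); unfold N; lia).
exact M.
Qed.

Lemma qsum_moment_odd_step n E : (1 <= k)%nat -> (forall y, qsum_moment (2 * n) n y = E) ->
  forall x M, qsum_moment (S (2 * n)) (S n) (x + INR M) =
              qsum_moment (S (2 * n)) (S n) x + INR M * (- (INR n + 1) * (2 * INR n + 1) * E).
Proof.
intros hk HE.
set (c := qsum_moment (S (2 * n)) (S n)).
assert (Hc : fdiff_null 2 c).
{ assert (D := qsum_moment_fdiff_null (S (2 * n)) (S n)).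
  replace (2 * S n + 1 - S (2 * n))%nat with 2%nat in D by lia; exact D. }
assert (Hstep := fdiff_null_2_nat_step c Hc).
replace (- (INR n + 1) * (2 * INR n + 1) * E) with (c 1 - c 0); [exact Hstep|].
assert (Hk : INR k <> 0) by (apply not_0_INR; lia).
assert (D := qsum_moment_odd_diff n 0 E HE); fold c in D.
rewrite (Hstep 0 k), !S_INR, mult_INR in D; simpl INR in D.
apply (Rmult_eq_reg_l (INR k)); [lra | exact Hk].
Qed.

Lemma qsum_moment_odd_top n g :
  (forall x M, qsum_moment (S (2 * n)) (S n) (x + INR M) = qsum_moment (S (2 * n)) (S n) x + INR M * g) ->
  forall M, qsum_moment (S (2 * n)) (S n) (INR M) = g * (INR M + INR r * INR (S (2 * n))).
Proof.
intros Hstep M.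
assert (A := qsum_moment_odd_reflect n 0).
assert (A2 := Hstep (-2 * INR r * INR (S (2 * n)) - 0) (2 * r * S (2 * n))%nat).
rewrite !mult_INR in A2; change (INR 2) with 2 in A2.
replace (-2 * INR r * INR (S (2 * n)) - 0 + 2 * INR r * INR (S (2 * n))) with 0 in A2 by ring.
assert (B := Hstep 0 M); rewrite Rplus_0_l in B.
rewrite B; lra.
Qed.

Lemma qsum_moment_even_top n g :
  (forall x M, qsum_moment (S (2 * n)) (S n) (x + INR M) = qsum_moment (S (2 * n)) (S n) x + INR M * g) ->
  forall x, qsum_moment (2 * S n) (S n) x = g * (INR k - 2 * INR r).
Proof.
intros Hstep x.
replace (2 * S n)%nat with (S (S (2 * n))) by lia.
unfold qsum_moment; rewrite qsum_expoly_S, moment_app, moment_opp, moment_shift_low_S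
  by (intros; apply (qsum_moment_vanish (S (2 * n))); lia).
fold (qsum_moment (S (2 * n)) (S n) (x + INR k)) (qsum_moment (S (2 * n)) (S n) (x + 2 * INR r)).
fold (qsum_moment (S (2 * n)) n (x + 2 * INR r)).
rewrite (qsum_moment_vanish (S (2 * n)) n) by lia.
assert (H1 := Hstep x k); assert (H2 := Hstep x (2 * r)%nat).
rewrite mult_INR in H2; change (INR 2) with 2 in H2.
lra.
Qed.

Definition lead_slope n := INR (Factorial.fact (S n)) * neg_odd_prod n * (INR k - 2 * INR r) ^ n.

Lemma qsum_moment_lead_step n : (1 <= k)%nat ->
  forall x M, qsum_moment (S (2 * n)) (S n) (x + INR M) =
              qsum_moment (S (2 * n)) (S n) x + INR M * lead_slope n.
Proof.
intros hk; induction n as [|n IH].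
- replace (lead_slope 0) with (- (INR 0 + 1) * (2 * INR 0 + 1) * 1)
    by (unfold lead_slope; simpl; ring).
  apply qsum_moment_odd_step; [exact hk | intros; unfold qsum_moment; simpl; ring].
- replace (lead_slope (S n)) with
    (- (INR (S n) + 1) * (2 * INR (S n) + 1) * (lead_slope n * (INR k - 2 * INR r))).
  + apply qsum_moment_odd_step; [exact hk | exact (qsum_moment_even_top n _ IH)].
  + unfold lead_slope; cbn [neg_odd_prod pow]; rewrite (fact_simpl (S n)), mult_INR, !S_INR; ring.
Qed.

End Moments.

Lemma pow_neq_1 p a : 0 < p -> p <> 1 -> (1 <= a)%nat -> p ^ a <> 1.
Proof.
intros H0 H1 Ha; destruct (Rlt_or_le p 1) as [Hl|Hl].
- assert (0 <= p ^ a < 1) by (apply pow_lt_1_compat; [lra | lia]); lra.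
- assert (1 < p ^ a) by (apply Rlt_pow_R1; [lra | lia]); lra.
Qed.

Section GaussianBinomial.
Variables (p : R) (Hp0 : 0 < p) (Hp1 : p <> 1).

Lemma qpoch_diag_S n : qpoch p p (S n) = qpoch p p n * (1 - p ^ S n).
Proof. simpl; ring. Qed.

Lemma qpoch_diag_neq_0 n : qpoch p p n <> 0.
Proof.
induction n as [|n IH]; [simpl; lra|].
rewrite qpoch_diag_S; apply Rmult_integral_contrapositive; split; [exact IH|].
assert (p ^ S n <> 1) by (apply pow_neq_1; auto; lia); lra.
Qed.

Lemma qbinom_0 N : qbinom p N 0 = 1.
Proof. unfold qbinom; rewrite Nat.sub_0_r; simpl qpoch; field; apply qpoch_diag_neq_0. Qed.

Lemma qbinom_diag N : qbinom p N N = 1.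
Proof. unfold qbinom; rewrite Nat.sub_diag; simpl qpoch; field; apply qpoch_diag_neq_0. Qed.

(* [qbinom p N j] is junk for [j > N]; this is its extension by zero. *)
Definition qbinom0 N j := if (j <=? N)%nat then qbinom p N j else 0.

Lemma qbinom0_pascal N i : (i <= N)%nat -> qbinom0 (S N) (S i) = qbinom0 N i + p ^ S i * qbinom0 N (S i).
Proof.
intros Hi; unfold qbinom0.
rewrite (proj2 (Nat.leb_le (S i) (S N))), (proj2 (Nat.leb_le i N)) by lia.
destruct (Nat.eq_dec i N) as [->|Hne].
- rewrite (proj2 (Nat.leb_nle (S N) N)), !qbinom_diag by lia; ring.
- rewrite (proj2 (Nat.leb_le (S i) N)) by lia.
  unfold qbinom; set (a := (N - S i)%nat).
  replace (S N - S i)%nat with (S a) by (unfold a; lia).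
  replace (N - i)%nat with (S a) by (unfold a; lia).
  rewrite !qpoch_diag_S.
  replace (p ^ S N) with (p ^ S i * p ^ S a) by (rewrite <- pow_add; f_equal; unfold a; lia).
  assert (p ^ S i <> 1) by (apply pow_neq_1; auto; lia).
  assert (p ^ S a <> 1) by (apply pow_neq_1; auto; lia).
  field; repeat split; try lra; apply qpoch_diag_neq_0.
Qed.
End GaussianBinomial.

Section AltQSum.
Variables (r k : nat) (q : R).

Definition alt_qsum m N :=
  sum_f_R0 (fun j => (-1) ^ j * q ^ (r * j * j + m * j) * qbinom (q ^ k) N j) N.

Lemma alt_qsum_qbinom0 m N M : (N <= M)%nat ->
  alt_qsum m N = sum_f_R0 (fun j => (-1) ^ j * q ^ (r * j * j + m * j) * qbinom0 (q ^ k) N j) M.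
Proof.
intros H; induction H as [|M H IH].
- apply sum_eq; intros j Hj; unfold qbinom0; rewrite (proj2 (Nat.leb_le j N)) by lia; reflexivity.
- rewrite tech5, <- IH; unfold qbinom0; rewrite (proj2 (Nat.leb_nle (S M) N)) by lia; ring.
Qed.

Hypotheses (hk : (1 <= k)%nat) (Hq0 : 0 < q) (Hq1 : q <> 1).

Let Hqk0 : 0 < q ^ k. Proof. apply pow_lt, Hq0. Qed.
Let Hqk1 : q ^ k <> 1. Proof. apply pow_neq_1; auto. Qed.

Lemma alt_qsum_S m N : alt_qsum m (S N) = alt_qsum (m + k) N - q ^ (r + m) * alt_qsum (m + 2 * r) N.
Proof.
rewrite (alt_qsum_qbinom0 m (S N) (S N)), decomp_sum by lia; simpl pred.
rewrite (sum_eq _ (fun i => (-1) ^ S i * q ^ (r * S i * S i + m * S i) * qbinom0 (q ^ k) N i +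
                           (-1) ^ S i * q ^ (r * S i * S i + m * S i) * (q ^ k) ^ S i * qbinom0 (q ^ k) N (S i)))
  by (intros i Hi; rewrite (qbinom0_pascal _ Hqk0 Hqk1) by lia; ring).
rewrite sum_plus.
assert (E1 : sum_f_R0 (fun i => (-1) ^ S i * q ^ (r * S i * S i + m * S i) * qbinom0 (q ^ k) N i) N =
             - q ^ (r + m) * alt_qsum (m + 2 * r) N).
{ rewrite (alt_qsum_qbinom0 (m + 2 * r) N N), scal_sum by lia; apply sum_eq; intros i Hi.
  replace (r * S i * S i + m * S i)%nat with ((r + m) + (r * i * i + (m + 2 * r) * i))%nat by nia.
  rewrite pow_add; simpl; ring. }
assert (E2 : (-1) ^ 0 * q ^ (r * 0 * 0 + m * 0) * qbinom0 (q ^ k) (S N) 0 +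
             sum_f_R0 (fun i => (-1) ^ S i * q ^ (r * S i * S i + m * S i) * (q ^ k) ^ S i *
                                qbinom0 (q ^ k) N (S i)) N = alt_qsum (m + k) N).
{ rewrite (alt_qsum_qbinom0 (m + k) N (S N)), (decomp_sum _ (S N)) by lia; simpl pred; f_equal.
  - unfold qbinom0; simpl Nat.leb; rewrite !qbinom_0 by assumption; rewrite !Nat.mul_0_r; simpl; ring.
  - apply sum_eq; intros i Hi; rewrite <- pow_mult.
    replace (r * S i * S i + (m + k) * S i)%nat with ((r * S i * S i + m * S i) + k * S i)%nat by nia.
    rewrite (pow_add q (r * S i * S i + m * S i) (k * S i)); ring. }
rewrite E1, <- E2; ring.
Qed.

Lemma alt_qsum_eq_qsum_fun N : forall m, alt_qsum m N = qsum_fun (INR r) (INR k) N (INR m) (ln q).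
Proof.
induction N as [|N IH]; intros m.
- rewrite qsum_fun_0; unfold alt_qsum; simpl; rewrite qbinom_0 by assumption; rewrite !Nat.mul_0_r; simpl; ring.
- rewrite alt_qsum_S, qsum_fun_S, !IH, !plus_INR, mult_INR; change (INR 2) with 2.
  rewrite <- Rpower_pow, plus_INR by exact Hq0; reflexivity.
Qed.
End AltQSum.

Lemma expoly_div_pow_right_lim e n : (forall s, (s <= n)%nat -> moment s e = 0) ->
  forall eps, 0 < eps -> exists del, 0 < del /\ forall y, 0 < y < del ->
  Rabs (expoly_eval e y / y ^ S n - moment (S n) e / INR (Factorial.fact (S n))) < eps.
Proof.
intros Hs eps Heps.
set (F := INR (Factorial.fact (S n))).
assert (HF : 0 < F) by apply INR_fact_lt_0.
assert (Hcont : continuity_pt (expoly_deriv (S n) e) 0).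
{ apply continuity_pt_filterlim, (@ex_derive_continuous R_AbsRing R_NormedModule).
  eexists; apply is_derive_expoly_deriv. }
destruct (Hcont (eps * F)) as [alp [Halp Hc]]; [nra|].
exists alp; split; [exact Halp|]; intros y [Hy0 Hyd].
destruct (Taylor_Lagrange (expoly_eval e) n 0 y Hy0 (fun t _ j _ => ex_derive_n_expoly_eval j e t))
  as [z [[Hz0 Hzy] Ht]].
rewrite sum_eq_R0 in Ht
  by (intros s Hsn; rewrite Derive_n_expoly_eval, expoly_deriv_0, Hs by exact Hsn; ring).
rewrite Derive_n_expoly_eval, Rminus_0_r in Ht; fold F in Ht.
assert (Hz : Rabs (expoly_deriv (S n) e z - moment (S n) e) < eps * F).
{ rewrite <- expoly_deriv_0; apply (Hc z); split; [split; [exact I | lra]|].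
  simpl; unfold R_dist; rewrite Rminus_0_r, Rabs_pos_eq; lra. }
assert (y ^ S n <> 0) by (apply pow_nonzero; lra).
replace (expoly_eval e y / y ^ S n - moment (S n) e / F)
  with ((expoly_deriv (S n) e z - moment (S n) e) / F) by (rewrite Ht; field; split; lra).
rewrite Rabs_div, (Rabs_pos_eq F) by lra.
apply (Rmult_lt_reg_r F); [exact HF|]; unfold Rdiv; rewrite Rmult_assoc, Rinv_l; lra.
Qed.

Lemma expoly_div_pow_mirror e n y : y <> 0 ->
  expoly_eval e y / y ^ S n - moment (S n) e / INR (Factorial.fact (S n)) =
  (-1) ^ S n * (expoly_eval (expoly_mirror e) (- y) / (- y) ^ S n -
                moment (S n) (expoly_mirror e) / INR (Factorial.fact (S n))).
Proof.
intros Hy.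
rewrite expoly_eval_mirror, moment_mirror, Ropp_involutive.
replace (- y) with (-1 * y) by ring; rewrite Rpow_mult_distr.
assert (INR (Factorial.fact (S n)) <> 0) by apply INR_fact_neq_0.
assert (y ^ S n <> 0) by (apply pow_nonzero; exact Hy).
assert (Hs : (-1) ^ S n * (-1) ^ S n = 1)
  by (rewrite <- Rpow_mult_distr; replace (-1 * -1) with 1 by ring; apply pow1).
assert ((-1) ^ S n <> 0) by (apply pow_nonzero; lra).
field_simplify; auto; replace (((-1) ^ S n) ^ 2) with 1 by (rewrite <- Hs; ring); field; auto.
Qed.

Lemma expoly_div_pow_lim e n : (forall s, (s <= n)%nat -> moment s e = 0) ->
  limit1_in (fun y => expoly_eval e y / y ^ S n) (fun y => y <> 0)
    (moment (S n) e / INR (Factorial.fact (S n))) 0.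
Proof.
intros Hs eps Heps.
destruct (expoly_div_pow_right_lim e n Hs eps Heps) as [d1 [Hd1 H1]].
assert (Hs' : forall s, (s <= n)%nat -> moment s (expoly_mirror e) = 0)
  by (intros; rewrite moment_mirror, Hs by assumption; ring).
destruct (expoly_div_pow_right_lim (expoly_mirror e) n Hs' eps Heps) as [d2 [Hd2 H2]].
exists (Rmin d1 d2); split; [apply Rmin_pos; assumption|].
intros y [Hy Hd]; change (Rabs (y - 0) < Rmin d1 d2) in Hd; rewrite Rminus_0_r in Hd.
change (Rabs (expoly_eval e y / y ^ S n - moment (S n) e / INR (Factorial.fact (S n))) < eps).
assert (Hm1 := Rmin_l d1 d2); assert (Hm2 := Rmin_r d1 d2).
destruct (Rlt_or_le 0 y) as [Hp|Hn].
- apply H1; rewrite Rabs_pos_eq in Hd; lra.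
- rewrite Rabs_left in Hd by lra.
  rewrite expoly_div_pow_mirror, Rabs_mult, pow_1_abs, Rmult_1_l by lra.
  apply H2; lra.
Qed.

Lemma one_minus_exp_div_lim c : limit1_in (fun y => (1 - exp (c * y)) / y) (fun y => y <> 0) (- c) 0.
Proof.
assert (Hd : derivable_pt_lim (fun t => exp (c * t)) 0 c).
{ apply is_derive_Reals; auto_derive; [exact I|]; rewrite Rmult_0_r, exp_0; ring. }
apply limit1_ext with (fun h => - ((exp (c * (0 + h)) - exp (c * 0)) / h)).
- intros y Hy; rewrite Rplus_0_l, Rmult_0_r, exp_0; field; exact Hy.
- apply limit_Ropp, (uniqueness_step2 (fun t => exp (c * t))), Hd.
Qed.

Lemma exp_pow_INR y j : exp y ^ j = exp (INR j * y).
Proof.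
induction j as [|j IH]; [simpl; rewrite Rmult_0_l, exp_0; reflexivity|].
rewrite <- tech_pow_Rmult, IH, <- exp_plus, S_INR; f_equal; ring.
Qed.

Lemma qpoch_exp_S n y :
  qpoch (exp y) (exp y ^ 2) (S (S n)) = qpoch (exp y) (exp y ^ 2) (S n) * (1 - exp ((2 * INR (S n) + 1) * y)).
Proof.
change (qpoch (exp y) (exp y ^ 2) (S (S n))) with
  (qpoch (exp y) (exp y ^ 2) (S n) * (1 - (exp y ^ 2) ^ S n * exp y)).
rewrite <- pow_mult, (exp_pow_INR y (2 * S n)), <- exp_plus, mult_INR.
do 3 f_equal; simpl INR; ring.
Qed.

Lemma qpoch_exp_div_pow_lim n :
  limit1_in (fun y => qpoch (exp y) (exp y ^ 2) (S n) / y ^ S n) (fun y => y <> 0) (neg_odd_prod n) 0.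
Proof.
induction n as [|n IH].
- apply limit1_ext with (fun y => (1 - exp (1 * y)) / y); [|apply one_minus_exp_div_lim].
  intros y Hy; simpl; rewrite Rmult_1_l; field; exact Hy.
- apply limit1_ext with (fun y => qpoch (exp y) (exp y ^ 2) (S n) / y ^ S n *
                                  ((1 - exp ((2 * INR (S n) + 1) * y)) / y)).
  + intros y Hy; rewrite qpoch_exp_S; change (y ^ S (S n)) with (y * y ^ S n).
    field; split; [apply pow_nonzero|]; exact Hy.
  + apply limit_mul; [exact IH | apply one_minus_exp_div_lim].
Qed.

Lemma neg_odd_prod_neq_0 n : neg_odd_prod n <> 0.
Proof.
induction n as [|n IH]; cbn [neg_odd_prod]; [lra|].
apply Rmult_integral_contrapositive; split; [exact IH|].
rewrite S_INR; pose proof (pos_INR n); lra.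
Qed.

Lemma qpoch_exp_neq_0 n y : y <> 0 -> qpoch (exp y) (exp y ^ 2) n <> 0.
Proof.
intros Hy; induction n as [|n IH]; cbn [qpoch]; [lra|].
apply Rmult_integral_contrapositive; split; [exact IH|].
rewrite <- pow_mult, (exp_pow_INR y (2 * n)), <- exp_plus; intros H.
assert (E : exp (INR (2 * n) * y + y) = exp 0) by (rewrite exp_0; lra).
apply exp_inv in E; rewrite mult_INR in E; simpl INR in E; pose proof (pos_INR n); nra.
Qed.

Lemma expoly_div_qpoch_exp_lim e n : (forall s, (s <= n)%nat -> moment s e = 0) ->
  limit1_in (fun y => expoly_eval e y / qpoch (exp y) (exp y ^ 2) (S n)) (fun y => y <> 0)
    (moment (S n) e / INR (Factorial.fact (S n)) / neg_odd_prod n) 0.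
Proof.
intros Hs.
apply limit1_ext with
  (fun y => expoly_eval e y / y ^ S n * / (qpoch (exp y) (exp y ^ 2) (S n) / y ^ S n)).
- intros y Hy; assert (y ^ S n <> 0) by (apply pow_nonzero; exact Hy).
  assert (qpoch (exp y) (exp y ^ 2) (S n) <> 0) by (apply qpoch_exp_neq_0; exact Hy).
  field; split; assumption.
- apply limit_mul; [apply expoly_div_pow_lim; exact Hs|].
  apply limit_inv; [apply qpoch_exp_div_pow_lim | apply neg_odd_prod_neq_0].
Qed.

Lemma limit1_in_1_of_exp f l :
  limit1_in (fun y => f (exp y)) (fun y => y <> 0) l 0 -> limit1_in f (fun q => q <> 1) l 1.
Proof.
intros H eps Heps.
destruct (H eps Heps) as [d [Hd Hf]].
destruct (ln_continue 1 Rlt_0_1 d Hd) as [d' [Hd' Hln]].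
exists (Rmin d' 1); split; [apply Rmin_pos; lra|].
intros q [Hq1 Hqd]; simpl in *; unfold R_dist in *.
assert (Hm1 := Rmin_l d' 1); assert (Hm2 := Rmin_r d' 1).
assert (Hq0 : 0 < q) by (apply Rabs_def2 in Hqd; lra).
rewrite <- (exp_ln q Hq0); apply Hf; split.
- intros E; apply Hq1; rewrite <- (exp_ln q Hq0), E, exp_0; reflexivity.
- rewrite <- ln_1; apply Hln; split; [split; [exact Hq0 | auto] | lra].
Qed.

Theorem theorem2p4 (r m k n : nat) (hk : (1 <= k)%nat) :
  limit1_in (thm_quot r m k n) (fun q => q <> 1)
    (INR ((2 * n + 1) * r + m) * (INR k - 2 * INR r) ^ n) 1.
Proof.
set (e := qsum_expoly (INR r) (INR k) (S (2 * n)) (INR m)).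
assert (Hlow : forall s, (s <= n)%nat -> moment s e = 0)
  by (intros s Hs; apply (qsum_moment_vanish r k); lia).
assert (Htop : moment (S n) e = lead_slope r k n * (INR m + INR r * INR (S (2 * n))))
  by exact (qsum_moment_odd_top r k n _ (qsum_moment_lead_step r k n hk) m).
apply limit1_in_1_of_exp.
apply limit1_ext with (fun y => expoly_eval e y / qpoch (exp y) (exp y ^ 2) (S n)).
- intros y Hy.
  assert (Hq1 : exp y <> 1) by (intros E; apply Hy; rewrite <- (ln_exp y), E, ln_1; reflexivity).
  unfold thm_quot; rewrite Nat.add_1_r; f_equal; symmetry.
  change (thm_num r m k n (exp y)) with (alt_qsum r k (exp y) m (2 * n + 1)).
  rewrite alt_qsum_eq_qsum_fun, ln_exp, Nat.add_1_r by (exact hk || apply exp_pos || exact Hq1).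
  reflexivity.
- replace (INR ((2 * n + 1) * r + m) * (INR k - 2 * INR r) ^ n)
    with (moment (S n) e / INR (Factorial.fact (S n)) / neg_odd_prod n).
  + apply expoly_div_qpoch_exp_lim, Hlow.
  + rewrite Htop; unfold lead_slope.
    assert (INR (Factorial.fact (S n)) <> 0) by apply INR_fact_neq_0.
    assert (neg_odd_prod n <> 0) by apply neg_odd_prod_neq_0.
    rewrite plus_INR, !mult_INR, plus_INR, S_INR, mult_INR; simpl INR; field; split; assumption.
Qed.
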